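(* Let $\varepsilon,\beta>0$, let $u_{\varepsilon,\beta,0}\in C^\infty(\mathbb{R})$ satisfy, with $C_0$ independent of $\varepsilon,\beta$, $$\|u_{\varepsilon,\beta,0}\|^2_{L^2}+\|u_{\varepsilon,\beta,0}\|^4_{L^4}+(\beta+\varepsilon^2)\|\partial_x u_{\varepsilon,\beta,0}\|^2_{L^2}\le C_0,\quad (\beta\varepsilon+\beta\varepsilon^2+\beta^2)\|\partial_{xx}^2 u_{\varepsilon,\beta,0}\|^2_{L^2}+(\beta^2\varepsilon^2+\beta^3)\|\partial_{xxx}^3 u_{\varepsilon,\beta,0}\|^2_{L^2}\le C_0,\quad \beta^4\|\partial_{xxxx}^4 u_{\varepsilon,\beta,0}\|^2_{L^2}\le C_0,$$ and let $u_{\varepsilon,\beta}$ be the smooth solution of $$\partial_t u_{\varepsilon,\beta}+\partial_x u_{\varepsilon,\beta}^2+\beta\partial_{xxx}^3u_{\varepsilon,\beta}-\beta\partial_{txx}^3u_{\varepsilon,\beta}+\beta^2\partial_{txxxx}^5u_{\varepsilon,\beta}=\varepsilon\partial_{xx}^2u_{\varepsilon,\beta},\qquad u_{\varepsilon,\beta}(0,\cdot)=u_{\varepsilon,\beta,0}.$$ Then for each $t>0$, $$\|u_{\varepsilon,\beta}(t,\cdot)\|^2_{L^2(\mathbb{R})}+\beta\|\partial_x u_{\varepsilon,\beta}(t,\cdot)\|^2_{L^2(\mathbb{R})}+\beta^2\|\partial_{xx}^2 u_{\varepsilon,\beta}(t,\cdot)\|^2_{L^2(\mathbb{R})}+2\varepsilon\int_0^t\|\partial_x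 u_{\varepsilon,\beta}(s,\cdot)\|^2_{L^2(\mathbb{R})}ds\le C_0,$$ and in particular $$\|u_{\varepsilon,\beta}(t,\cdot)\|_{L^\infty(\mathbb{R})}\le C_0\beta^{-1/4},\qquad \|\partial_x u_{\varepsilon,\beta}(t,\cdot)\|_{L^\infty(\mathbb{R})}\le C_0\beta^{-3/4},$$ where $C_0$ denotes constants depending only on the initial data (not on $\varepsilon,\beta,t$).
   Context: Solutions are smooth and decay, together with their derivatives, as $|x|\to\infty$. *)

From Stdlib Require Import Reals List.
From Coquelicot Require Import Coquelicot.
Open Scope R_scope.

Definition dt (f : R -> R -> R) : R -> R -> R :=
  fun t x => Derive (fun s => f s x) t.
Definition dx (f : R -> R -> R) : R -> R -> R :=
  fun t x => Derive (fun y => f t y) x.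

(** Iterated partial derivative along a word of directions
    ([true] = d/dt, [false] = d/dx), innermost derivative last in the list. *)
Fixpoint pd (l : list bool) (f : R -> R -> R) : R -> R -> R :=
  match l with
  | nil => f
  | b :: l' => if b then dt (pd l' f) else dx (pd l' f)
  end.

Definition smooth2 (f : R -> R -> R) : Prop :=
  forall (l : list bool) (t x : R),
    ex_derive (fun s => pd l f s x) t /\
    ex_derive (fun y => pd l f t y) x /\
    continuous (fun p : R * R => pd l f (fst p) (snd p)) (t, x).

Definition smooth1 (f : R -> R) : Prop :=
  forall (n : nat) (x : R), ex_derive_n f n x.

Definition decays (f : R -> R -> R) : Prop :=
  forall (l : list bool) (T : R), 0 <= T ->
    exists M : R, forall t x, 0 <= t <= T ->
      Rabs (pd l f t x) <= M / (1 + x ^ 2).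

Definition Rint (f : R -> R) : R :=
  RInt_gen f (Rbar_locally m_infty) (Rbar_locally p_infty).

Definition L2sq (f : R -> R) : R := Rint (fun x => f x ^ 2).
Definition L4pow4 (f : R -> R) : R := Rint (fun x => f x ^ 4).

From Stdlib Require Import Reals Lra Psatz FunctionalExtensionality List.
From Coquelicot Require Import Coquelicot.
Open Scope R_scope.

(* Multiplying the equation by [u] and integrating by parts gives the energy identity
   [d/dt (|u|^2 + b |u_x|^2 + b^2 |u_xx|^2) = - 2 e |u_x|^2]: the transport, dispersive and
   pseudo-parabolic terms are all exact x-derivatives.  The identity is integrated over
   [[-N, N] x [0, t]], where the boundary fluxes and the truncation errors of the L^2 norms
   are O(1/N) by the decay of [u] and its derivatives, and then N goes to infinity.  The
   L^oo bounds follow from [w f(x)^2 <= |f|^2 + w^2 |f'|^2] with [w = sqrt b], applied to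
   [u] and to [u_x]. *)

Definition decay_bound (h : R -> R) (K : R) : Prop :=
  forall x, Rabs (h x) <= K / (1 + x ^ 2).

Lemma decay_bound_nonneg h K : decay_bound h K -> 0 <= K.
Proof.
  intros Hh. specialize (Hh 0). pose proof (Rabs_pos (h 0)).
  replace (K / (1 + 0 ^ 2)) with K in Hh by field. lra.
Qed.

Lemma decay_bound_at h K N : decay_bound h K -> 0 < N ->
  Rabs (h N) <= K / N /\ Rabs (h (- N)) <= K / N.
Proof.
  intros Hh HN. pose proof (decay_bound_nonneg _ _ Hh) as HK.
  assert (K / (1 + N ^ 2) <= K / N).
  { apply Rmult_le_compat_l; auto. apply Rinv_le_contravar; nra. }
  split; eapply Rle_trans; try apply Hh.
  - lra.
  - replace ((- N) ^ 2) with (N ^ 2) by ring. lra.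
Qed.

Lemma decay_bound_plus f g A B :
  decay_bound f A -> decay_bound g B -> decay_bound (fun x => f x + g x) (A + B).
Proof.
  intros Hf Hg x. eapply Rle_trans; [apply Rabs_triang|].
  replace ((A + B) / (1 + x ^ 2)) with (A / (1 + x ^ 2) + B / (1 + x ^ 2)) by (field; nra).
  apply Rplus_le_compat; auto.
Qed.

Lemma decay_bound_opp f A : decay_bound f A -> decay_bound (fun x => - f x) A.
Proof. intros Hf x. rewrite Rabs_Ropp. apply Hf. Qed.

Lemma decay_bound_minus f g A B :
  decay_bound f A -> decay_bound g B -> decay_bound (fun x => f x - g x) (A + B).
Proof. intros Hf Hg. apply (decay_bound_plus f (fun x => - g x)); auto using decay_bound_opp. Qed.

Lemma decay_bound_scal c f A : decay_bound f A -> decay_bound (fun x => c * f x) (Rabs c * A).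
Proof.
  intros Hf x. rewrite Rabs_mult. unfold Rdiv. rewrite Rmult_assoc.
  apply Rmult_le_compat_l; [apply Rabs_pos | apply Hf].
Qed.

Lemma decay_bound_mult f g A B :
  decay_bound f A -> decay_bound g B -> decay_bound (fun x => f x * g x) (A * B).
Proof.
  intros Hf Hg x. pose proof (decay_bound_nonneg _ _ Hf). pose proof (decay_bound_nonneg _ _ Hg).
  assert (B / (1 + x ^ 2) <= B).
  { unfold Rdiv. rewrite <- (Rmult_1_r B) at 2. apply Rmult_le_compat_l; auto.
    rewrite <- Rinv_1. apply Rinv_le_contravar; nra. }
  rewrite Rabs_mult. eapply Rle_trans.
  { apply Rmult_le_compat; try apply Rabs_pos; [apply Hf | apply Hg]. }
  replace (A * B / (1 + x ^ 2)) with (A / (1 + x ^ 2) * B) by (field; nra).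
  apply Rmult_le_compat_l; auto. apply Rdiv_le_0_compat; nra.
Qed.

Lemma decay_bound_pow f A n : decay_bound f A -> decay_bound (fun x => f x ^ S n) (A ^ S n).
Proof.
  intros Hf. induction n as [|n IH].
  - intros x. rewrite !pow_1. apply Hf.
  - apply (decay_bound_mult f (fun x => f x ^ S n)); auto.
Qed.

Ltac decay_step :=
  match goal with
  | |- decay_bound (fun _ => ?c * _) _ => eapply decay_bound_scal
  | |- decay_bound (fun _ => _ * _) _ => eapply decay_bound_mult
  | |- decay_bound (fun _ => _ + _) _ => eapply decay_bound_plus
  | |- decay_bound (fun _ => _ - _) _ => eapply decay_bound_minus
  | |- decay_bound (fun _ => - _) _ => eapply decay_bound_opp
  | |- decay_bound (fun _ => _ ^ _) _ => eapply decay_bound_pow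
  end.

Lemma is_RInt_inv_sq K a b : a <= b -> 0 < a \/ b < 0 ->
  is_RInt (fun x => K / x ^ 2) a b (K / a - K / b).
Proof.
  intros Hab Hsign.
  assert (Hnz : forall x, Rmin a b <= x <= Rmax a b -> x <> 0).
  { rewrite Rmin_left, Rmax_right by lra. intros x Hx. lra. }
  replace (K / a - K / b) with (minus ((fun x => - K / x) b) ((fun x => - K / x) a))
    by (unfold minus, plus, opp; simpl; field; lra).
  apply (is_RInt_derive (V := R_CompleteNormedModule)).
  - intros x Hx. specialize (Hnz x Hx). auto_derive; [auto | field; auto].
  - intros x Hx. specialize (Hnz x Hx).
    apply (ex_derive_continuous (fun x => K / x ^ 2)). auto_derive. auto.
Qed.

Lemma ex_RInt_of_continuous (h : R -> R) a b : (forall x, continuous h x) -> ex_RInt h a b.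
Proof. intros Hh. apply (ex_RInt_continuous (V := R_CompleteNormedModule)). auto. Qed.

Lemma limit_le_of_eventually_le {T : Type} {F : (T -> Prop) -> Prop} {HF : ProperFilter F}
  (f : T -> R) (l c r : R) :
  filterlim f F (locally l) -> F (fun x => Rabs (f x - c) <= r) -> Rabs (l - c) <= r.
Proof.
  intros Hl Hev. destruct (Rle_or_lt (Rabs (l - c)) r) as [|Hlt]; auto.
  assert (Hd : 0 < Rabs (l - c) - r) by lra.
  assert (Hnear : F (fun x => ball l (mkposreal _ Hd) (f x)))
    by exact (Hl _ (locally_ball l (mkposreal _ Hd))).
  destruct (filter_ex _ (filter_and _ _ Hnear Hev)) as [x [Hx Hfx]].
  change (Rabs (f x - l) < Rabs (l - c) - r) in Hx.
  pose proof (Rabs_triang (f x - c) (l - f x)).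
  replace (f x - c + (l - f x)) with (l - c) in * by ring.
  rewrite Rabs_minus_sym in Hx. lra.
Qed.

Section DecayingIntegrand.

Variables (h : R -> R) (K : R).
Hypotheses (Hcont : forall x, continuous h x) (Hdecay : decay_bound h K).

Lemma abs_RInt_far_le a b c : a <= b -> 0 < c -> c <= a \/ b <= - c ->
  Rabs (RInt h a b) <= K / c.
Proof.
  intros Hab Hc Hfar. pose proof (decay_bound_nonneg _ _ Hdecay) as HK.
  assert (Hsq : is_RInt (fun x => K / x ^ 2) a b (K / a - K / b))
    by (apply is_RInt_inv_sq; lra).
  eapply Rle_trans; [apply abs_RInt_le; auto; apply ex_RInt_of_continuous; auto|].
  eapply Rle_trans.
  { apply RInt_le with (g := fun x => K / x ^ 2); auto.
    - apply ex_RInt_of_continuous. intros x.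
      apply (continuous_comp h Rabs); [apply Hcont | apply continuous_Rabs].
    - eexists; eauto.
    - intros x Hx. eapply Rle_trans; [apply Hdecay|].
      apply Rmult_le_compat_l; auto.
      apply Rinv_le_contravar; [destruct Hfar; nra | lra]. }
  rewrite (is_RInt_unique _ _ _ _ Hsq).
  destruct Hfar as [Hfar | Hfar].
  - assert (0 <= K / b) by (apply Rdiv_le_0_compat; lra).
    assert (K / a <= K / c) by (apply Rmult_le_compat_l; auto; apply Rinv_le_contravar; lra).
    lra.
  - assert (K / a <= 0).
    { unfold Rdiv. rewrite <- (Rmult_0_r K).
      apply Rmult_le_compat_l; auto. left; apply Rinv_lt_0_compat; lra. }
    assert (- (K / b) <= K / c).
    { replace (- (K / b)) with (K / - b) by (field; lra).
      apply Rmult_le_compat_l; auto. apply Rinv_le_contravar; lra. }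
    lra.
Qed.

Lemma RInt_sub_RInt_sym_le N a b : 0 < N -> a < - N -> N < b ->
  Rabs (RInt h a b - RInt h (- N) N) <= 2 * K / N.
Proof.
  intros HN Ha Hb.
  assert (Hsplit : RInt h a b = RInt h a (- N) + RInt h (- N) N + RInt h N b).
  { rewrite <- (RInt_Chasles h a N b), <- (RInt_Chasles h a (- N) N)
      by (apply ex_RInt_of_continuous; auto).
    unfold plus; simpl. ring. }
  pose proof (abs_RInt_far_le a (- N) N ltac:(lra) HN ltac:(lra)).
  pose proof (abs_RInt_far_le N b N ltac:(lra) HN ltac:(lra)).
  rewrite Hsplit. replace (2 * K / N) with (K / N + K / N) by (field; lra).
  replace (RInt h a (- N) + RInt h (- N) N + RInt h N b - RInt h (- N) N)
    with (RInt h a (- N) + RInt h N b) by ring.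
  eapply Rle_trans; [apply Rabs_triang | lra].
Qed.

Let ends := filter_prod (Rbar_locally m_infty) (Rbar_locally p_infty).

Lemma ends_outside N : ends (fun ab : R * R => fst ab < - N /\ N < snd ab).
Proof.
  exists (fun a => a < - N) (fun b => N < b); [exists (- N) | exists N |]; auto.
Qed.

Lemma RInt_cauchy_at_infinity :
  exists l : R, filterlim (fun ab : R * R => RInt h (fst ab) (snd ab)) ends (locally l).
Proof.
  pose proof (decay_bound_nonneg _ _ Hdecay) as HK.
  apply (filterlim_locally_cauchy (U := R_CompleteSpace)). intros eps.
  pose proof (cond_pos eps) as Heps.
  set (N := (4 * K + 1) / eps).
  assert (HN : 0 < N) by (apply Rdiv_lt_0_compat; lra).
  assert (HKN : 4 * K / N < eps).
  { unfold N. replace (4 * K / ((4 * K + 1) / eps)) with (eps * (4 * K / (4 * K + 1)))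
      by (field; lra).
    rewrite <- (Rmult_1_r eps) at 2. apply Rmult_lt_compat_l; auto.
    apply Rlt_div_l; lra. }
  exists (fun ab : R * R => fst ab < - N /\ N < snd ab). split; [apply ends_outside|].
  intros [a b] [a' b'] [Ha Hb] [Ha' Hb']; simpl in *.
  pose proof (RInt_sub_RInt_sym_le N a b HN Ha Hb).
  pose proof (RInt_sub_RInt_sym_le N a' b' HN Ha' Hb').
  change (Rabs (RInt h a' b' - RInt h a b) < eps).
  replace (RInt h a' b' - RInt h a b)
    with ((RInt h a' b' - RInt h (- N) N) + (RInt h (- N) N - RInt h a b)) by ring.
  eapply Rle_lt_trans; [apply Rabs_triang|]. rewrite (Rabs_minus_sym (RInt h (- N) N)).
  replace (4 * K / N) with (2 * K / N + 2 * K / N) in HKN by (field; lra). lra.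
Qed.

Lemma Rint_sub_RInt_sym_le N : 0 < N -> Rabs (Rint h - RInt h (- N) N) <= 2 * K / N.
Proof.
  intros HN. destruct RInt_cauchy_at_infinity as [l Hl].
  assert (Hl_eq : Rint h = l).
  { apply is_RInt_gen_unique. intros P HP. unfold filtermapi.
    eapply filter_imp; [| exact (Hl P HP)].
    intros ab Hab. exists (RInt h (fst ab) (snd ab)). split; auto.
    apply (RInt_correct (V := R_CompleteNormedModule)). apply ex_RInt_of_continuous; auto. }
  rewrite Hl_eq.
  apply (limit_le_of_eventually_le _ _ _ _ Hl).
  eapply filter_imp; [| apply (ends_outside N)].
  intros [a b] [Ha Hb]. apply RInt_sub_RInt_sym_le; auto.
Qed.

End DecayingIntegrand.

Lemma le_of_le_add_div X Y Z N0 : (forall N, N0 < N -> 0 < N -> X <= Y + Z / N) -> X <= Y.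
Proof.
  intros H. destruct (Rle_or_lt X Y) as [|Hlt]; auto. exfalso.
  set (N := Rmax (Rmax (N0 + 1) 1) ((Rabs Z + 1) / (X - Y))).
  assert (H1 : N0 + 1 <= N) by (unfold N; eapply Rle_trans; apply Rmax_l).
  assert (H2 : 1 <= N) by (unfold N; eapply Rle_trans; [apply Rmax_r | apply Rmax_l]).
  assert (H3 : (Rabs Z + 1) / (X - Y) <= N) by apply Rmax_r.
  specialize (H N ltac:(lra) ltac:(lra)).
  assert (Z / N <= Rabs Z / N)
    by (apply Rmult_le_compat_r; [left; apply Rinv_0_lt_compat; lra | apply Rle_abs]).
  assert (Rabs Z / N < X - Y).
  { apply Rlt_div_l; [lra|]. apply Rle_div_l in H3; [|lra].
    pose proof (Rabs_pos Z). nra. }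
  lra.
Qed.

Lemma Rint_nonneg h K : (forall x, continuous h x) -> decay_bound h K ->
  (forall x, 0 <= h x) -> 0 <= Rint h.
Proof.
  intros Hc Hd Hpos. apply (le_of_le_add_div _ _ (2 * K) 0). intros N _ HN.
  pose proof (Rint_sub_RInt_sym_le h K Hc Hd N HN) as Htrunc.
  assert (0 <= RInt h (- N) N) by (apply RInt_ge_0; [lra | apply ex_RInt_of_continuous | ]; auto).
  apply Rabs_le_between in Htrunc. lra.
Qed.

Lemma continuous_Rplus {U : UniformSpace} (f g : U -> R) x :
  continuous f x -> continuous g x -> continuous (fun y => f y + g y) x.
Proof. apply (continuous_plus (V := R_NormedModule)). Qed.

Lemma continuous_Rminus {U : UniformSpace} (f g : U -> R) x :
  continuous f x -> continuous g x -> continuous (fun y => f y - g y) x.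
Proof. apply (continuous_minus (V := R_NormedModule)). Qed.

Lemma continuous_Rmult {U : UniformSpace} (f g : U -> R) x :
  continuous f x -> continuous g x -> continuous (fun y => f y * g y) x.
Proof. apply (continuous_mult (K := R_AbsRing)). Qed.

Lemma continuous_Rpow {U : UniformSpace} (f : U -> R) n x :
  continuous f x -> continuous (fun y => f y ^ n) x.
Proof.
  intros Hf. induction n as [|n IH]; simpl.
  - apply continuous_const.
  - apply continuous_Rmult; auto.
Qed.

Lemma RInt_plus_scal (f g : R -> R) c a b : ex_RInt f a b -> ex_RInt g a b ->
  RInt (fun x => f x + c * g x) a b = RInt f a b + c * RInt g a b.
Proof.
  intros Hf Hg. apply (is_RInt_unique (V := R_CompleteNormedModule)).
  apply (is_RInt_plus (V := R_CompleteNormedModule) f (fun x => scal c (g x))).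
  - apply RInt_correct; auto.
  - apply (is_RInt_scal (V := R_CompleteNormedModule)). apply RInt_correct; auto.
Qed.

Lemma RInt_minus_scal (f g : R -> R) c a b : ex_RInt f a b -> ex_RInt g a b ->
  RInt (fun x => f x - c * g x) a b = RInt f a b - c * RInt g a b.
Proof.
  intros Hf Hg. apply (is_RInt_unique (V := R_CompleteNormedModule)).
  apply (is_RInt_minus (V := R_CompleteNormedModule) f (fun x => scal c (g x))).
  - apply RInt_correct; auto.
  - apply (is_RInt_scal (V := R_CompleteNormedModule)). apply RInt_correct; auto.
Qed.

Lemma is_derive_sq (f : R -> R) x df :
  is_derive f x df -> is_derive (fun y => f y ^ 2) x (2 * f x * df).
Proof.
  intros Hf. replace (2 * f x * df) with (INR 2 * df * f x ^ Nat.pred 2) by (simpl; ring).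
  apply is_derive_pow; auto.
Qed.

Ltac continuity_step :=
  match goal with
  | |- continuous (fun _ => _ + _) _ => apply continuous_Rplus
  | |- continuous (fun _ => _ - _) _ => apply continuous_Rminus
  | |- continuous (fun _ => _ * _) _ => apply continuous_Rmult
  | |- continuous (fun _ => _ ^ _) _ => apply continuous_Rpow
  | |- continuous (fun _ => ?c) _ => apply continuous_const
  end.

Ltac solve_continuity := repeat continuity_step.

Section Interpolation.

Variables f g : R -> R.
Hypotheses (Hder : forall x, is_derive f x (g x)) (Hg : forall x, continuous g x).

Lemma continuous_of_is_derive x : continuous f x.
Proof. apply (ex_derive_continuous f). eexists; apply Hder. Qed.

(* FTC for [f^2] on [[-N, x]], then [2 w f g <= f^2 + w^2 g^2]. *)
Lemma sq_le_RInt_sym w N x : 0 < w -> - N <= x <= N ->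
  w * (f x ^ 2 - f (- N) ^ 2)
    <= RInt (fun y => f y ^ 2) (- N) N + w ^ 2 * RInt (fun y => g y ^ 2) (- N) N.
Proof.
  intros Hw Hx. pose proof continuous_of_is_derive as Hf.
  set (h := fun y => f y ^ 2 + w ^ 2 * g y ^ 2).
  assert (Hh : forall y, continuous h y) by (intros; unfold h; solve_continuity; auto).
  assert (Hftc : is_RInt (fun y => w * (2 * f y * g y)) (- N) x (w * (f x ^ 2 - f (- N) ^ 2))).
  { apply (is_RInt_scal (V := R_CompleteNormedModule)).
    apply (is_RInt_derive (V := R_CompleteNormedModule) (fun y => f y ^ 2)).
    - intros y _. apply is_derive_sq, Hder.
    - intros y _. solve_continuity; auto. }
  rewrite <- (is_RInt_unique (V := R_CompleteNormedModule) _ _ _ _ Hftc).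
  rewrite <- RInt_plus_scal by (apply ex_RInt_of_continuous; intros; solve_continuity; auto).
  fold h. apply Rle_trans with (RInt h (- N) x).
  - apply RInt_le; [lra | | apply ex_RInt_of_continuous; auto |].
    + apply ex_RInt_of_continuous. intros. solve_continuity; auto.
    + intros y _. unfold h. pose proof (pow2_ge_0 (f y - w * g y)). nra.
  - rewrite <- (RInt_Chasles h (- N) x N) by (apply ex_RInt_of_continuous; auto).
    assert (0 <= RInt h x N).
    { apply RInt_ge_0; [lra | apply ex_RInt_of_continuous; auto |].
      intros y _. unfold h. pose proof (pow2_ge_0 (f y)). pose proof (pow2_ge_0 (g y)). nra. }
    unfold plus; simpl. lra.
Qed.

Lemma sq_le_L2_interp A B w x : decay_bound f A -> decay_bound g B -> 0 < w ->
  w * f x ^ 2 <= Rint (fun y => f y ^ 2) + w ^ 2 * Rint (fun y => g y ^ 2).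
Proof.
  intros HA HB Hw. pose proof continuous_of_is_derive as Hf.
  pose proof (decay_bound_pow f A 1 HA) as HA2. pose proof (decay_bound_pow g B 1 HB) as HB2.
  assert (Hf2 : forall y, continuous (fun y => f y ^ 2) y) by (intros; solve_continuity; auto).
  assert (Hg2 : forall y, continuous (fun y => g y ^ 2) y) by (intros; solve_continuity; auto).
  apply (le_of_le_add_div _ _ (w * A ^ 2 + 2 * A ^ 2 + w ^ 2 * (2 * B ^ 2)) (Rabs x)).
  intros N HxN HN.
  assert (Hx : - N <= x <= N) by (apply Rabs_le_between; lra).
  pose proof (sq_le_RInt_sym w N x Hw Hx) as Hloc.
  pose proof (Rint_sub_RInt_sym_le (fun y => f y ^ 2) _ Hf2 HA2 N HN) as Htf.
  pose proof (Rint_sub_RInt_sym_le (fun y => g y ^ 2) _ Hg2 HB2 N HN) as Htg.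
  apply Rabs_le_between in Htf. apply Rabs_le_between in Htg.
  assert (w * f (- N) ^ 2 <= w * (A ^ 2 / N)).
  { apply Rmult_le_compat_l; [lra|].
    eapply Rle_trans; [apply Rle_abs | apply (decay_bound_at _ _ _ HA2 HN)]. }
  assert (w ^ 2 * RInt (fun y => g y ^ 2) (- N) N
            <= w ^ 2 * (Rint (fun y => g y ^ 2) + 2 * B ^ 2 / N))
    by (apply Rmult_le_compat_l; [nra | lra]).
  replace ((w * A ^ 2 + 2 * A ^ 2 + w ^ 2 * (2 * B ^ 2)) / N)
    with (w * (A ^ 2 / N) + 2 * A ^ 2 / N + w ^ 2 * (2 * B ^ 2 / N)) by (field; lra).
  lra.
Qed.

End Interpolation.

Lemma continuous_of_uniform_approx (F : R -> R) (I : R -> R -> R) C :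
  (forall N, 0 < N -> forall s, continuous (I N) s) ->
  (forall N s, 0 < N -> Rabs (F s - I N s) <= C / N) -> forall s, continuous F s.
Proof.
  intros HI HF s. apply (filterlim_locally (F := locally s) F (F s)). intros eps.
  pose proof (cond_pos eps) as Heps.
  assert (HC : 0 <= C).
  { specialize (HF 1 s Rlt_0_1). pose proof (Rabs_pos (F s - I 1 s)). lra. }
  set (N := 3 * (C + 1) / eps).
  assert (HN : 0 < N) by (apply Rdiv_lt_0_compat; lra).
  assert (HCN : C / N < eps / 3).
  { unfold N. replace (C / (3 * (C + 1) / eps)) with (eps / 3 * (C / (C + 1))) by (field; lra).
    rewrite <- (Rmult_1_r (eps / 3)) at 2. apply Rmult_lt_compat_l; [lra|].
    apply Rlt_div_l; lra. }
  assert (He3 : 0 < eps / 3) by lra.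
  pose proof (proj1 (filterlim_locally (F := locally s) (I N) (I N s)) (HI N HN s)
    (mkposreal _ He3)) as Hnear.
  eapply filter_imp; [| exact Hnear]. intros y Hy.
  change (Rabs (I N y - I N s) < eps / 3) in Hy. change (Rabs (F y - F s) < eps).
  pose proof (HF N y HN). pose proof (HF N s HN).
  replace (F y - F s) with ((F y - I N y) + (I N y - I N s) + (I N s - F s)) by ring.
  pose proof (Rabs_minus_sym (I N s) (F s)).
  pose proof (Rabs_triang (F y - I N y + (I N y - I N s)) (I N s - F s)).
  pose proof (Rabs_triang (F y - I N y) (I N y - I N s)).
  lra.
Qed.

Definition clamp (t s : R) : R := Rmax 0 (Rmin t s).

Lemma clamp_range t s : 0 <= t -> 0 <= clamp t s <= t.
Proof. intros Ht. unfold clamp, Rmax, Rmin. repeat destruct Rle_dec; lra. Qed.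

Lemma clamp_id t s : 0 <= s <= t -> clamp t s = s.
Proof. intros Hs. unfold clamp, Rmax, Rmin. repeat destruct Rle_dec; lra. Qed.

Lemma continuous_clamp t s : continuous (clamp t) s.
Proof.
  apply (filterlim_locally (F := locally s)). intros eps. exists eps. intros y Hy.
  change (Rabs (y - s) < eps) in Hy. change (Rabs (clamp t y - clamp t s) < eps).
  eapply Rle_lt_trans; [| exact Hy].
  unfold clamp, Rmax, Rmin, Rabs. repeat destruct Rle_dec; repeat destruct Rcase_abs; lra.
Qed.

Lemma continuity_2d_pt_pow f n x y :
  continuity_2d_pt f x y -> continuity_2d_pt (fun a b => f a b ^ n) x y.
Proof.
  intros Hf. induction n as [|n IH]; simpl.
  - apply continuity_2d_pt_const.
  - apply continuity_2d_pt_mult; auto.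
Qed.

Ltac continuity_2d_step :=
  match goal with
  | |- continuity_2d_pt (fun _ _ => _ + _) _ _ => apply continuity_2d_pt_plus
  | |- continuity_2d_pt (fun _ _ => _ - _) _ _ => apply continuity_2d_pt_minus
  | |- continuity_2d_pt (fun _ _ => _ * _) _ _ => apply continuity_2d_pt_mult
  | |- continuity_2d_pt (fun _ _ => _ ^ _) _ _ => apply continuity_2d_pt_pow
  | |- continuity_2d_pt (fun _ _ => ?c) _ _ => apply continuity_2d_pt_const
  end.

Lemma is_derive_RInt_param_cont (f df : R -> R -> R) a b s :
  (forall z x, is_derive (fun w => f w x) z (df z x)) ->
  (forall z x, continuity_2d_pt df z x) ->
  (forall z x, continuous (fun y => f z y) x) ->
  is_derive (fun z => RInt (fun x => f z x) a b) s (RInt (fun x => df s x) a b).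
Proof.
  intros Hd Hc Hx.
  assert (Hdf : forall z x, Derive (fun w => f w x) z = df z x)
    by (intros; apply is_derive_unique, Hd).
  rewrite (RInt_ext (fun x => df s x) (fun x => Derive (fun w => f w x) s))
    by (intros; symmetry; apply Hdf).
  apply is_derive_RInt_param.
  - apply filter_forall. intros z x _. eexists. apply Hd.
  - intros x _. apply (continuity_2d_pt_ext df); [intros; symmetry; apply Hdf | apply Hc].
  - apply filter_forall. intros z. apply ex_RInt_of_continuous. auto.
Qed.

Notation L0 := (@nil bool).
Notation Lx := (false :: nil).
Notation Lxx := (false :: false :: nil).
Notation Lxxx := (false :: false :: false :: nil).
Notation Lt := (true :: nil).
Notation Ltx := (true :: false :: nil).
Notation Ltxx := (true :: false :: false :: nil).
Notation Lxtxx := (false :: true :: false :: false :: nil).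
Notation Ltxxxx := (true :: false :: false :: false :: false :: nil).

Section SmoothFunction.

Variable u : R -> R -> R.
Hypothesis Hu : smooth2 u.

Lemma is_derive_pd_x l t x : is_derive (fun y => pd l u t y) x (pd (false :: l) u t x).
Proof. destruct (Hu l t x) as [_ [Hx _]]. apply (Derive_correct _ _ Hx). Qed.

Lemma is_derive_pd_t l t x : is_derive (fun s => pd l u s x) t (pd (true :: l) u t x).
Proof. destruct (Hu l t x) as [Ht _]. apply (Derive_correct _ _ Ht). Qed.

Lemma Derive_pd_x l t x : Derive (fun y => pd l u t y) x = pd (false :: l) u t x.
Proof. reflexivity. Qed.

Lemma Derive_pd_t l t x : Derive (fun s => pd l u s x) t = pd (true :: l) u t x.
Proof. reflexivity. Qed.

Lemma continuous_pd_x l t x : continuous (fun y => pd l u t y) x.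
Proof. apply (ex_derive_continuous (fun y => pd l u t y)). eexists. apply is_derive_pd_x. Qed.

Lemma continuous_pd_t l t x : continuous (fun s => pd l u s x) t.
Proof. apply (ex_derive_continuous (fun s => pd l u s x)). eexists. apply is_derive_pd_t. Qed.

Lemma continuity_2d_pd l t x : continuity_2d_pt (fun s y => pd l u s y) t x.
Proof. apply continuity_2d_pt_filterlim. apply (Hu l t x). Qed.

Lemma pd_x_t_comm l t x : pd (false :: true :: l) u t x = pd (true :: false :: l) u t x.
Proof.
  symmetry. apply (Schwarz (pd l u) t x).
  - exists (mkposreal 1 Rlt_0_1). intros a b _ _.
    destruct (Hu l a b) as [Hla [Hlb _]].
    destruct (Hu (false :: l) a b) as [Hxa _].
    destruct (Hu (true :: l) a b) as [_ [Htb _]].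
    repeat split; auto.
  - apply (continuity_2d_pd (true :: false :: l)).
  - apply (continuity_2d_pd (false :: true :: l)).
Qed.

Lemma pd_xxtxx t x : pd (false :: Lxtxx) u t x = pd Ltxxxx u t x.
Proof.
  assert (Hxt : pd Lxtxx u = pd (true :: Lxxx) u).
  { do 2 (apply functional_extensionality; intro). apply (pd_x_t_comm Lxx). }
  change (dx (pd Lxtxx u) t x = pd Ltxxxx u t x). rewrite Hxt. apply (pd_x_t_comm Lxxx).
Qed.

End SmoothFunction.

Section Energy.

Variables (u : R -> R -> R) (b e : R).
Hypothesis Hu : smooth2 u.
Hypothesis Hpde : forall s x, 0 <= s ->
  dt u s x + dx (fun s y => (u s y) ^ 2) s x + b * pd Lxxx u s x - b * pd Ltxx u s x
  + b ^ 2 * pd Ltxxxx u s x = e * pd Lxx u s x.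

Definition energy_density s x :=
  pd L0 u s x ^ 2 + b * pd Lx u s x ^ 2 + b ^ 2 * pd Lxx u s x ^ 2.

Definition energy_density_dt s x :=
  2 * pd L0 u s x * pd Lt u s x + b * (2 * pd Lx u s x * pd Ltx u s x)
  + b ^ 2 * (2 * pd Lxx u s x * pd Ltxx u s x).

(* Along solutions, [energy_density_dt = d/dx energy_flux - 2 e u_x^2]. *)
Definition energy_flux s x :=
  - (4 / 3) * pd L0 u s x ^ 3 - 2 * b * (pd L0 u s x * pd Lxx u s x) + b * pd Lx u s x ^ 2
  + 2 * b * (pd L0 u s x * pd Ltx u s x)
  - 2 * b ^ 2 * (pd L0 u s x * pd Lxtxx u s x - pd Lx u s x * pd Ltxx u s x)
  + 2 * e * (pd L0 u s x * pd Lx u s x).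

(* Keeps [auto_derive] from unrolling the derivative words; [Derive_pd_x] and [Derive_pd_t]
   fold its output back. *)
Local Opaque pd.

Lemma is_derive_energy_density s x :
  is_derive (fun z => energy_density z x) s (energy_density_dt s x).
Proof.
  unfold energy_density, energy_density_dt. auto_derive.
  - repeat split; eexists; apply (is_derive_pd_t u Hu).
  - rewrite !(Derive_pd_t u). ring.
Qed.

Lemma is_derive_energy_flux s x : 0 <= s ->
  is_derive (fun y => energy_flux s y) x (energy_density_dt s x + 2 * e * pd Lx u s x ^ 2).
Proof.
  intros Hs. unfold energy_flux, energy_density_dt. auto_derive.
  - repeat split; eexists; apply (is_derive_pd_x u Hu).
  - rewrite !(Derive_pd_x u), (pd_x_t_comm u Hu Lx), (pd_xxtxx u Hu).
    pose proof (Hpde s x Hs) as Hsx.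
    assert (Hsq : dx (fun s y => u s y ^ 2) s x = 2 * pd L0 u s x * pd Lx u s x).
    { apply is_derive_unique, is_derive_sq, (is_derive_pd_x u Hu L0). }
    change (dt u s x) with (pd Lt u s x) in Hsx. rewrite Hsq in Hsx.
    replace (pd Lt u s x) with (e * pd Lxx u s x - 2 * pd L0 u s x * pd Lx u s x
      - b * pd Lxxx u s x + b * pd Ltxx u s x - b ^ 2 * pd Ltxxxx u s x) by lra.
    field.
Qed.

Local Ltac continuity_pd :=
  repeat first
    [ continuity_step
    | match goal with
      | |- continuous (fun y => pd ?l u ?s y) ?x => apply (continuous_pd_x u Hu l s x)
      | |- continuous (pd ?l u ?s) ?x => apply (continuous_pd_x u Hu l s x)
      | |- continuous (fun z => pd ?l u z ?x) ?s => apply (continuous_pd_t u Hu l s x)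
      end ].

Local Ltac continuity_2d_pd :=
  repeat first
    [ continuity_2d_step
    | match goal with
      | |- continuity_2d_pt (fun s y => pd ?l u s y) ?t ?x => apply (continuity_2d_pd u Hu l t x)
      | |- continuity_2d_pt (pd ?l u) ?t ?x => apply (continuity_2d_pd u Hu l t x)
      end ].

Definition local_dissipation N s := RInt (fun x => pd Lx u s x ^ 2) (- N) N.

Lemma RInt_energy_density_dt s N : 0 <= s ->
  RInt (energy_density_dt s) (- N) N
  = energy_flux s N - energy_flux s (- N) - 2 * e * local_dissipation N s.
Proof.
  intros Hs. unfold local_dissipation.
  assert (Hftc : is_RInt (fun x => energy_density_dt s x + 2 * e * pd Lx u s x ^ 2) (- N) N
                   (energy_flux s N - energy_flux s (- N))).
  { apply (is_RInt_derive (V := R_CompleteNormedModule) (fun y => energy_flux s y)).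
    - intros x _. apply is_derive_energy_flux; auto.
    - intros x _. unfold energy_density_dt. continuity_pd. }
  apply (is_RInt_unique (V := R_CompleteNormedModule)) in Hftc.
  rewrite RInt_plus_scal in Hftc
    by (apply ex_RInt_of_continuous; intros; unfold energy_density_dt; continuity_pd).
  rewrite <- Hftc. lra.
Qed.

Lemma is_derive_local_energy N s :
  is_derive (fun z => RInt (energy_density z) (- N) N) s (RInt (energy_density_dt s) (- N) N).
Proof.
  apply is_derive_RInt_param_cont.
  - intros; apply is_derive_energy_density.
  - intros. unfold energy_density_dt. continuity_2d_pd.
  - intros. unfold energy_density. continuity_pd.
Qed.

Lemma continuous_local_dissipation N s : continuous (local_dissipation N) s.
Proof.
  apply (ex_derive_continuous (local_dissipation N)). eexists.
  apply (is_derive_RInt_param_cont (fun z x => pd Lx u z x ^ 2)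
           (fun z x => 2 * pd Lx u z x * pd Ltx u z x)).
  - intros. apply (is_derive_sq (fun w => pd Lx u w x)), (is_derive_pd_t u Hu).
  - intros. continuity_2d_pd.
  - intros. continuity_pd.
Qed.

Lemma continuous_energy_flux_t x s : continuous (fun z => energy_flux z x) s.
Proof. unfold energy_flux. continuity_pd. Qed.

Lemma local_energy_identity N t : 0 <= t ->
  RInt (energy_density t) (- N) N - RInt (energy_density 0) (- N) N
  = RInt (fun s => energy_flux s N - energy_flux s (- N)) 0 t
    - 2 * e * RInt (local_dissipation N) 0 t.
Proof.
  intros Ht.
  assert (Hflux : forall s, continuous (fun z => energy_flux z N - energy_flux z (- N)) s)
    by (intros; apply continuous_Rminus; apply continuous_energy_flux_t).
  rewrite <- RInt_minus_scal
    by (apply ex_RInt_of_continuous; auto using continuous_local_dissipation).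
  symmetry. apply (is_RInt_unique (V := R_CompleteNormedModule)).
  apply (is_RInt_derive (V := R_CompleteNormedModule)
           (fun z => RInt (energy_density z) (- N) N)).
  - intros s Hs. rewrite Rmin_left in Hs by lra.
    rewrite <- RInt_energy_density_dt by lra.
    apply is_derive_local_energy.
  - intros s _. apply continuous_Rminus; auto.
    apply continuous_Rmult; [apply continuous_const | apply continuous_local_dissipation].
Qed.

Lemma L2sq_pd_sub_RInt_le l s M N : decay_bound (fun y => pd l u s y) M -> 0 < N ->
  Rabs (Rint (fun y => pd l u s y ^ 2) - RInt (fun y => pd l u s y ^ 2) (- N) N)
    <= 2 * M ^ 2 / N.
Proof.
  intros HM HN. apply (Rint_sub_RInt_sym_le _ (M ^ 2)); auto.
  - intros. continuity_pd.
  - apply (decay_bound_pow _ _ 1 HM).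
Qed.

Lemma L2sq_pd_nonneg l s M : decay_bound (fun y => pd l u s y) M ->
  0 <= Rint (fun y => pd l u s y ^ 2).
Proof.
  intros HM. apply (Rint_nonneg _ (M ^ 2)).
  - intros. continuity_pd.
  - apply (decay_bound_pow _ _ 1 HM).
  - intros. apply pow2_ge_0.
Qed.

Definition energy s :=
  Rint (fun y => pd L0 u s y ^ 2) + b * Rint (fun y => pd Lx u s y ^ 2)
  + b ^ 2 * Rint (fun y => pd Lxx u s y ^ 2).

Definition dissipation s := Rint (fun y => pd Lx u s y ^ 2).

Lemma energy_sub_RInt_le s M0 M1 M2 N : 0 <= b -> 0 < N ->
  decay_bound (fun y => pd L0 u s y) M0 -> decay_bound (fun y => pd Lx u s y) M1 ->
  decay_bound (fun y => pd Lxx u s y) M2 ->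
  Rabs (energy s - RInt (energy_density s) (- N) N)
    <= (2 * M0 ^ 2 + b * (2 * M1 ^ 2) + b ^ 2 * (2 * M2 ^ 2)) / N.
Proof.
  intros Hb HN H0 H1 H2.
  pose proof (L2sq_pd_sub_RInt_le L0 s M0 N H0 HN) as T0.
  pose proof (L2sq_pd_sub_RInt_le Lx s M1 N H1 HN) as T1.
  pose proof (L2sq_pd_sub_RInt_le Lxx s M2 N H2 HN) as T2.
  unfold energy_density.
  rewrite !RInt_plus_scal by (apply ex_RInt_of_continuous; intros; continuity_pd).
  unfold energy.
  apply Rabs_le_between in T0. apply Rabs_le_between in T1. apply Rabs_le_between in T2.
  apply Rabs_le_between.
  assert (0 <= b ^ 2) by apply pow2_ge_0.
  replace ((2 * M0 ^ 2 + b * (2 * M1 ^ 2) + b ^ 2 * (2 * M2 ^ 2)) / N)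
    with (2 * M0 ^ 2 / N + b * (2 * M1 ^ 2 / N) + b ^ 2 * (2 * M2 ^ 2 / N)) by (field; lra).
  split; nra.
Qed.

Lemma dissipation_sub_local_le s M N : decay_bound (fun y => pd Lx u s y) M -> 0 < N ->
  Rabs (dissipation s - local_dissipation N s) <= 2 * M ^ 2 / N.
Proof. apply L2sq_pd_sub_RInt_le. Qed.

(* [dissipation] is only controlled for times in [[0, t]], so it is frozen outside. *)
Lemma continuous_dissipation_clamp t M : 0 <= t ->
  (forall s, 0 <= s <= t -> decay_bound (fun y => pd Lx u s y) M) ->
  forall s, continuous (fun z => dissipation (clamp t z)) s.
Proof.
  intros Ht HM.
  apply (continuous_of_uniform_approx _ (fun N z => local_dissipation N (clamp t z)) (2 * M ^ 2)).
  - intros N _ s. apply (continuous_comp (clamp t) (local_dissipation N)).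
    + apply continuous_clamp.
    + apply continuous_local_dissipation.
  - intros N s HN. apply dissipation_sub_local_le; auto. apply HM, clamp_range, Ht.
Qed.

Hypothesis Hdecay : decays u.

Lemma decay_bound_pd_on l t : 0 <= t ->
  exists M, forall s, 0 <= s <= t -> decay_bound (fun y => pd l u s y) M.
Proof. intros Ht. destruct (Hdecay l t Ht) as [M HM]. exists M. intros s Hs x. auto. Qed.

Lemma L2sq_pd_nonneg_at l s : 0 <= s -> 0 <= Rint (fun y => pd l u s y ^ 2).
Proof.
  intros Hs. destruct (decay_bound_pd_on l s Hs) as [M HM].
  apply (L2sq_pd_nonneg l s M), HM. lra.
Qed.

Lemma L4pow4_nonneg_at s : 0 <= s -> 0 <= L4pow4 (u s).
Proof.
  intros Hs. destruct (decay_bound_pd_on L0 s Hs) as [M HM].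
  apply (Rint_nonneg (fun y => pd L0 u s y ^ 4) (M ^ 4)).
  - intros. continuity_pd.
  - apply (decay_bound_pow (fun y => pd L0 u s y) M 3), HM. lra.
  - intros y. replace (pd L0 u s y ^ 4) with ((pd L0 u s y ^ 2) ^ 2) by ring. apply pow2_ge_0.
Qed.

Lemma decay_bound_energy_flux_on t : 0 <= t ->
  exists K, forall s, 0 <= s <= t -> decay_bound (fun y => energy_flux s y) K.
Proof.
  intros Ht.
  destruct (decay_bound_pd_on L0 t Ht) as [M0 H0].
  destruct (decay_bound_pd_on Lx t Ht) as [M1 H1].
  destruct (decay_bound_pd_on Lxx t Ht) as [M2 H2].
  destruct (decay_bound_pd_on Ltx t Ht) as [M3 H3].
  destruct (decay_bound_pd_on Ltxx t Ht) as [M4 H4].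
  destruct (decay_bound_pd_on Lxtxx t Ht) as [M5 H5].
  eexists. intros s Hs.
  specialize (H0 s Hs). specialize (H1 s Hs). specialize (H2 s Hs).
  specialize (H3 s Hs). specialize (H4 s Hs). specialize (H5 s Hs).
  unfold energy_flux.
  repeat first [eassumption | decay_step].
Qed.

Lemma RInt_energy_flux_boundary_le t K N : 0 <= t -> 0 < N ->
  (forall s, 0 <= s <= t -> decay_bound (fun y => energy_flux s y) K) ->
  Rabs (RInt (fun s => energy_flux s N - energy_flux s (- N)) 0 t) <= t * (2 * K / N).
Proof.
  intros Ht HN HK. replace t with (t - 0) at 2 by ring.
  apply abs_RInt_le_const; [lra | |].
  - apply ex_RInt_of_continuous. intros. apply continuous_Rminus; apply continuous_energy_flux_t.
  - intros s Hs. destruct (decay_bound_at _ _ N (HK s Hs) HN).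
    unfold Rminus at 1. eapply Rle_trans; [apply Rabs_triang|]. rewrite Rabs_Ropp. lra.
Qed.

Lemma RInt_dissipation_clamp t : 0 <= t ->
  RInt dissipation 0 t = RInt (fun z => dissipation (clamp t z)) 0 t.
Proof.
  intros Ht. apply RInt_ext. rewrite Rmin_left, Rmax_right by lra.
  intros s Hs. rewrite clamp_id; auto. lra.
Qed.

Lemma RInt_local_dissipation_sub_le t M N : 0 <= t -> 0 < N ->
  (forall s, 0 <= s <= t -> decay_bound (fun y => pd Lx u s y) M) ->
  Rabs (RInt (local_dissipation N) 0 t - RInt dissipation 0 t) <= t * (2 * M ^ 2 / N).
Proof.
  intros Ht HN HM. rewrite RInt_dissipation_clamp by auto.
  pose proof (continuous_dissipation_clamp t M Ht HM) as Hc.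
  rewrite <- (RInt_minus (V := R_CompleteNormedModule))
    by (apply ex_RInt_of_continuous; auto using continuous_local_dissipation).
  replace t with (t - 0) at 2 by ring.
  apply abs_RInt_le_const; [lra | |].
  - apply ex_RInt_of_continuous. intros.
    apply continuous_Rminus; auto using continuous_local_dissipation.
  - intros s Hs.
    change (minus (local_dissipation N s) (dissipation (clamp t s)))
      with (local_dissipation N s - dissipation (clamp t s)).
    rewrite clamp_id, Rabs_minus_sym by lra. apply dissipation_sub_local_le; auto.
Qed.

Lemma RInt_dissipation_nonneg t : 0 <= t -> 0 <= RInt dissipation 0 t.
Proof.
  intros Ht. destruct (decay_bound_pd_on Lx t Ht) as [M HM].
  rewrite RInt_dissipation_clamp by auto.
  apply RInt_ge_0; [lra | apply ex_RInt_of_continuous, (continuous_dissipation_clamp t M Ht HM) |].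
  intros s Hs. apply (L2sq_pd_nonneg Lx _ M), HM, clamp_range, Ht.
Qed.

Lemma energy_inequality t : 0 < b -> 0 < e -> 0 <= t ->
  energy t + 2 * e * RInt dissipation 0 t <= energy 0.
Proof.
  intros Hb He Ht.
  destruct (decay_bound_pd_on L0 t Ht) as [M0 H0].
  destruct (decay_bound_pd_on Lx t Ht) as [M1 H1].
  destruct (decay_bound_pd_on Lxx t Ht) as [M2 H2].
  destruct (decay_bound_energy_flux_on t Ht) as [K HK].
  set (T := 2 * M0 ^ 2 + b * (2 * M1 ^ 2) + b ^ 2 * (2 * M2 ^ 2)).
  apply (le_of_le_add_div _ _ (2 * T + t * (2 * K) + 2 * e * (t * (2 * M1 ^ 2))) 0).
  intros N _ HN.
  assert (Hs0 : 0 <= 0 <= t) by lra. assert (Hst : 0 <= t <= t) by lra.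
  pose proof (local_energy_identity N t Ht) as Hid.
  pose proof (energy_sub_RInt_le t M0 M1 M2 N ltac:(lra) HN (H0 t Hst) (H1 t Hst) (H2 t Hst)) as Et.
  pose proof (energy_sub_RInt_le 0 M0 M1 M2 N ltac:(lra) HN (H0 0 Hs0) (H1 0 Hs0) (H2 0 Hs0)) as E0.
  pose proof (RInt_energy_flux_boundary_le t K N Ht HN HK) as Hflux.
  pose proof (RInt_local_dissipation_sub_le t M1 N Ht HN H1) as Hdiss.
  apply Rabs_le_between in Et. apply Rabs_le_between in E0.
  apply Rabs_le_between in Hflux. apply Rabs_le_between in Hdiss.
  assert (2 * e * (RInt dissipation 0 t - RInt (local_dissipation N) 0 t)
            <= 2 * e * (t * (2 * M1 ^ 2 / N))) by (apply Rmult_le_compat_l; lra).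
  replace ((2 * T + t * (2 * K) + 2 * e * (t * (2 * M1 ^ 2))) / N)
    with (T / N + T / N + t * (2 * K / N) + 2 * e * (t * (2 * M1 ^ 2 / N))) by (field; lra).
  fold T in Et, E0. lra.
Qed.

Lemma sqrt_mul_sq_pd_le l t x : 0 < b -> 0 <= t ->
  sqrt b * pd l u t x ^ 2
    <= Rint (fun y => pd l u t y ^ 2) + b * Rint (fun y => pd (false :: l) u t y ^ 2).
Proof.
  intros Hb Ht.
  destruct (decay_bound_pd_on l t Ht) as [M0 H0].
  destruct (decay_bound_pd_on (false :: l) t Ht) as [M1 H1].
  assert (Hst : 0 <= t <= t) by lra.
  rewrite <- (pow2_sqrt b) at 2 by lra.
  apply (sq_le_L2_interp (fun y => pd l u t y) (fun y => pd (false :: l) u t y)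
    (is_derive_pd_x u Hu l t) (continuous_pd_x u Hu (false :: l) t) M0 M1);
    auto using sqrt_lt_R0.
Qed.

Lemma sqrt_mul_sq_le_energy t x : 0 < b -> 0 <= t -> sqrt b * u t x ^ 2 <= energy t.
Proof.
  intros Hb Ht. pose proof (sqrt_mul_sq_pd_le L0 t x Hb Ht).
  pose proof (L2sq_pd_nonneg_at Lxx t Ht).
  unfold energy. change (u t x) with (pd L0 u t x). nra.
Qed.

Lemma mul_sqrt_mul_sq_le_energy t x : 0 < b -> 0 <= t -> b * sqrt b * dx u t x ^ 2 <= energy t.
Proof.
  intros Hb Ht. pose proof (sqrt_mul_sq_pd_le Lx t x Hb Ht) as Hx.
  pose proof (L2sq_pd_nonneg_at L0 t Ht).
  apply (Rmult_le_compat_l b) in Hx; [| lra]. unfold energy. change (dx u t x) with (pd Lx u t x).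
  lra.
Qed.

End Energy.

Lemma abs_le_mul_Rpower b p C x : 0 < b -> 0 <= C ->
  Rpower b (2 * p) * x ^ 2 <= C ^ 2 -> Rabs x <= C * Rpower b (- p).
Proof.
  intros Hb HC Hx.
  assert (Hp : 0 < Rpower b p) by apply exp_pos.
  assert (Hsq : Rpower b (2 * p) = Rpower b p ^ 2)
    by (replace (2 * p) with (p + p) by ring; rewrite Rpower_plus; ring).
  assert (Habs : x ^ 2 = Rabs x ^ 2) by (rewrite RPow_abs, Rabs_pos_eq; nra).
  rewrite Hsq, Habs in Hx. rewrite Rpower_Ropp.
  apply (Rmult_le_reg_l (Rpower b p)); [lra|].
  rewrite (Rmult_comm C), <- Rmult_assoc, Rinv_r, Rmult_1_l by lra.
  pose proof (Rabs_pos x). nra.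
Qed.

Lemma energy_at_zero_le u b e C0 : smooth2 u -> decays u -> 0 < e -> 0 < b ->
  L2sq (u 0) + L4pow4 (u 0) + (b + e ^ 2) * L2sq (Derive_n (u 0) 1) <= C0 ->
  (b * e + b * e ^ 2 + b ^ 2) * L2sq (Derive_n (u 0) 2)
    + (b ^ 2 * e ^ 2 + b ^ 3) * L2sq (Derive_n (u 0) 3) <= C0 ->
  energy u b 0 <= 2 * C0.
Proof.
  intros Hu Hdecay He Hb Hlow Hhigh.
  pose proof (L4pow4_nonneg_at u Hu Hdecay 0 (Rle_refl 0)).
  pose proof (L2sq_pd_nonneg_at u Hu Hdecay Lx 0 (Rle_refl 0)).
  pose proof (L2sq_pd_nonneg_at u Hu Hdecay Lxx 0 (Rle_refl 0)).
  pose proof (L2sq_pd_nonneg_at u Hu Hdecay Lxxx 0 (Rle_refl 0)).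
  change (L2sq (u 0)) with (Rint (fun y => pd L0 u 0 y ^ 2)) in Hlow.
  change (L2sq (Derive_n (u 0) 1)) with (Rint (fun y => pd Lx u 0 y ^ 2)) in Hlow.
  change (L2sq (Derive_n (u 0) 2)) with (Rint (fun y => pd Lxx u 0 y ^ 2)) in Hhigh.
  change (L2sq (Derive_n (u 0) 3)) with (Rint (fun y => pd Lxxx u 0 y ^ 2)) in Hhigh.
  unfold energy.
  set (I1 := Rint (fun y => pd Lx u 0 y ^ 2)) in *.
  set (I2 := Rint (fun y => pd Lxx u 0 y ^ 2)) in *.
  set (I3 := Rint (fun y => pd Lxxx u 0 y ^ 2)) in *.
  assert (0 <= e ^ 2 * I1) by (apply Rmult_le_pos; nra).
  assert (0 <= (b * e + b * e ^ 2) * I2) by (apply Rmult_le_pos; nra).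
  assert (0 <= (b ^ 2 * e ^ 2 + b ^ 3) * I3) by (apply Rmult_le_pos; nra).
  lra.
Qed.

Theorem lemma2p1 :
  forall C0 : R, 0 <= C0 ->
  exists C : R,
  forall (eps beta : R) (u0 : R -> R) (u : R -> R -> R),
    0 < eps -> 0 < beta ->
    smooth1 u0 ->
    (* bounds on the initial datum *)
    L2sq u0 + L4pow4 u0 + (beta + eps ^ 2) * L2sq (Derive_n u0 1) <= C0 ->
    (beta * eps + beta * eps ^ 2 + beta ^ 2) * L2sq (Derive_n u0 2)
      + (beta ^ 2 * eps ^ 2 + beta ^ 3) * L2sq (Derive_n u0 3) <= C0 ->
    beta ^ 4 * L2sq (Derive_n u0 4) <= C0 ->
    (* u is a smooth solution, decaying with its derivatives *)
    smooth2 u ->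
    decays u ->
    (forall t x, 0 <= t ->
       dt u t x + dx (fun s y => (u s y) ^ 2) t x + beta * pd (false :: false :: false :: nil) u t x
       - beta * pd (true :: false :: false :: nil) u t x
       + beta ^ 2 * pd (true :: false :: false :: false :: false :: nil) u t x
       = eps * pd (false :: false :: nil) u t x) ->
    (forall x, u 0 x = u0 x) ->
    forall t : R, 0 < t ->
      L2sq (u t) + beta * L2sq (dx u t) + beta ^ 2 * L2sq (dx (dx u) t)
        + 2 * eps * RInt (fun s => L2sq (dx u s)) 0 t <= C /\
      (forall x, Rabs (u t x) <= C * Rpower beta (- (1 / 4))) /\
      (forall x, Rabs (dx u t x) <= C * Rpower beta (- (3 / 4))).
Proof.
  intros C0 HC0. exists (2 * C0 + 1).
  intros eps beta u0 u Heps Hbeta _ Hlow Hhigh _ Hu Hdecay Hpde Hu0 t Ht.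
  assert (Hinit : u 0 = u0) by (apply functional_extensionality; auto). subst u0.
  pose proof (energy_at_zero_le u beta eps C0 Hu Hdecay Heps Hbeta Hlow Hhigh) as H0.
  pose proof (energy_inequality u beta eps Hu Hpde Hdecay t Hbeta Heps ltac:(lra)) as Hen.
  pose proof (RInt_dissipation_nonneg u Hu Hdecay t ltac:(lra)) as Hdiss.
  assert (Het : energy u beta t <= (2 * C0 + 1) ^ 2) by nra.
  split; [| split].
  - apply (Rle_trans _ (energy u beta 0)); [exact Hen | lra].
  - intros x. apply abs_le_mul_Rpower; [lra | lra |]. eapply Rle_trans; [| exact Het].
    replace (2 * (1 / 4)) with (/ 2) by field. rewrite Rpower_sqrt by lra.
    apply sqrt_mul_sq_le_energy; auto. lra.
  - intros x. apply abs_le_mul_Rpower; [lra | lra |]. eapply Rle_trans; [| exact Het].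
    replace (2 * (3 / 4)) with (1 + / 2) by field.
    rewrite Rpower_plus, Rpower_1, Rpower_sqrt by lra.
    apply mul_sqrt_mul_sq_le_energy; auto. lra.
Qed.
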